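(* Let $\phi$ be a flow of a compact metric space $X$. If $\phi$ is expansive on $X\setminus Sing(\phi)$, then $Sing(\phi)$ is dynamically isolated.
   Context: A flow is a continuous $\phi:\mathbb{R}\times X\to X$ with $\phi_0=\mathrm{id}$, $\phi_{t+s}=\phi_t\circ\phi_s$; $\phi_I(x)=\{\phi_t(x):t\in I\}$; $Sing(\phi)$ is the set of fixed points. $\phi$ is expansive on $\Lambda\subset X$ if for every $\epsilon>0$ there is $\delta>0$ such that whenever $x,y\in\Lambda$ and a continuous $s:\mathbb{R}\to\mathbb{R}$ with $s(0)=0$ satisfy $d(\phi_t(x),\phi_{s(t)}(y))\le\delta$ for all $t$, then $y\in\phi_{[-\epsilon,\epsilon]}(x)$. A compact invariant set $K$ is dynamically isolated if there is a neighborhood $U$ of $K$ with $K=\bigcap_{t\in\mathbb{R}}\phi_t(U)$. *)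

From HB Require Import structures.
From mathcomp Require Import all_boot all_order all_algebra.
From mathcomp Require Import all_classical all_reals all_analysis.
Set Implicit Arguments. Unset Strict Implicit. Unset Printing Implicit Defensive.
Import Order.TTheory GRing.Theory Num.Theory.
Import numFieldTopology.Exports.
Local Open Scope classical_set_scope.
Local Open Scope ring_scope.

Definition is_flow {R : realType} {X : topologicalType} (phi : R -> X -> X) : Prop :=
  continuous (fun p : R * X => phi p.1 p.2) /\
  (forall x, phi 0 x = x) /\
  (forall t s x, phi (t + s) x = phi t (phi s x)).

Definition orbit_seg {R : realType} {X : Type} (phi : R -> X -> X)
  (I : set R) (x : X) : set X := [set phi t x | t in I].

Definition Sing {R : realType} {X : Type} (phi : R -> X -> X) : set X :=
  [set x | forall t, phi t x = x].

Definition expansive_on {R : realType} {X : metricType R} (phi : R -> X -> X)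
  (L : set X) : Prop :=
  forall eps : R, 0 < eps -> exists2 delta : R, 0 < delta &
    forall x y, L x -> L y ->
    forall s : R -> R, continuous s -> s 0 = 0 ->
      (forall t, mdist (phi t x) (phi (s t) y) <= delta) ->
      orbit_seg phi `[- eps, eps] x y.

Definition dyn_isolated {R : realType} {X : topologicalType} (phi : R -> X -> X)
  (K : set X) : Prop :=
  [/\ compact K,
      (forall t x, K x -> K (phi t x)) &
      exists U : set X,
        (exists V : set X, [/\ open V, K `<=` V & V `<=` U]) /\
        K = \bigcap_(t in [set: R]) (phi t @` U)].

From HB Require Import structures.
From mathcomp Require Import all_boot all_order all_algebra.
From mathcomp Require Import all_classical all_reals all_analysis.
From mathcomp Require Import lra.
Import Order.TTheory GRing.Theory Num.Theory.
Import numFieldTopology.Exports.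
Set Implicit Arguments. Unset Strict Implicit. Unset Printing Implicit Defensive.
Local Open Scope classical_set_scope.
Local Open Scope ring_scope.

(* Fix an expansivity constant [d] of the regular points for [eps = 1].  If a
   regular point [z] moves by less than [d/4] in time at most 3 all along its
   orbit, comparing [z] with [phi_2 z] shows that [z] is periodic of period at
   most 3, so its orbit stays within [d/4] of [z].  Two such points within
   [3d/4] of each other are then [d]-shadowed under the constant
   reparametrisation, hence lie on one orbit.  So near a singular point there
   is at most one such regular orbit, and it keeps a positive distance from
   [Sing]: orbits staying closer to [Sing] than that are singular.
   Compactness of [Sing] makes this distance uniform. *)

Section Flow.
Variables (R : realType) (X : metricType R) (phi : R -> X -> X).
Hypothesis flow_phi : is_flow phi.

Let flow0 x : phi 0 x = x. Proof. by case: flow_phi => _ []. Qed.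
Let flowD t s x : phi (t + s) x = phi t (phi s x).
Proof. by case: flow_phi => _ []. Qed.

Lemma Sing_flow a z : Sing phi (phi a z) -> Sing phi z.
Proof.
move=> Sa t; have -> : z = phi (- a) (phi a z) by rewrite -flowD addNr flow0.
by rewrite !Sa.
Qed.

Lemma nonSing_dist_gt0 w : ~ Sing phi w ->
  exists2 r : R, 0 < r & forall q, Sing phi q -> r <= mdist w q.
Proof.
case: flow_phi => cont _ /existsNP[t tw].
set c := mdist (phi t w) w.
have c_gt0 : 0 < c by rewrite mdist_gt0; apply/eqP.
have c2_gt0 : 0 < c / 2 by rewrite divr_gt0.
have [[A B] /= [At Bw] AB] := cont (t, w) _ (nbhsx_ballx (phi t w) _ c2_gt0).
have [r r_gt0 rB] := (nbhs_ballP _ _).1 Bw.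
exists (Num.min r (c / 2)); first by rewrite lt_min r_gt0 c2_gt0.
move=> q Sq; rewrite leNgt lt_min; apply/negP => /andP[qr qc].
have Bq : B q by apply: rB; rewrite ballEmdist.
have := AB (t, q) (conj (nbhs_singleton At) Bq); rewrite /= ballEmdist /= Sq.
move=> tq; suff : c < c by rewrite ltxx.
rewrite {1}/c (le_lt_trans (metric_triangle _ q _)) // (splitr c).
by rewrite ltrD // metric_sym.
Qed.

Lemma closed_Sing : closed (Sing phi).
Proof.
move=> w cw; apply: contrapT => /nonSing_dist_gt0[r r_gt0 rS].
have [q [Sq]] := cw _ (nbhsx_ballx w r r_gt0).
by rewrite ballEmdist /= ltNge rS.
Qed.

Definition small_arc (c : R) (w : X) :=
  forall r, 0 <= r <= 3 -> mdist (phi r w) w < c.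

Lemma near_Sing_small_arc c q : 0 < c -> Sing phi q ->
  \forall z \near q, small_arc c z.
Proof.
case: flow_phi => cont _ c_gt0 Sq.
have c2_gt0 : 0 < c / 2 by rewrite divr_gt0.
have cover := (compact_near_coveringP _).1 (@segment_compact R 0 3) X (nbhs q)
  (fun z t => mdist (phi t z) z < c) (nbhs_filter q).
apply: filterS (cover _) => [z zc r /andP[r_ge0 r_le3]|t _].
  by apply: zc; rewrite /= in_itv /= r_ge0 r_le3.
have [[A B] /= [At Bq] AB] := cont (t, q) _ (nbhsx_ballx (phi t q) _ c2_gt0).
exists (A, B `&` ball q (c / 2)) => /=.
  by split=> //; apply: filterI => //; exact: nbhsx_ballx.
move=> [t' z] /= [At' [Bz]]; rewrite ballEmdist /= => qz.
have := AB (t', z) (conj At' Bz); rewrite /= Sq ballEmdist /= => tz.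
rewrite (le_lt_trans (metric_triangle _ q _)) // (splitr c).
by rewrite ltrD // metric_sym.
Qed.

Lemma periodic_flow_mod P z : 0 < P -> phi P z = z ->
  forall t, exists2 r, 0 <= r <= P & phi t z = phi r z.
Proof.
move=> P_gt0 Pz.
have flowMn n : phi (n%:R * P) z = z.
  by elim: n => [|n IH]; rewrite ?mul0r ?flow0 // mulrSr mulrDl mul1r flowD Pz.
have flowMz (k : int) : phi (k%:~R * P) z = z.
  case: k => n; first exact: flowMn.
  by rewrite NegzE intrN mulNr -{1}(flowMn n.+1) -flowD addNr flow0.
move=> t; set k := Num.floor (t / P).
exists (t - k%:~R * P).
  rewrite subr_ge0 lerBlDr -ler_pdivlMr // floor_le //=.
  rewrite -[P in P + _]mul1r -mulrDl -ler_pdivrMr //.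
  by have := floorD1_gt (t / P); rewrite intrD addrC => /ltW.
by rewrite -{2}(flowMz k) -flowD subrK.
Qed.

Section ExpansiveConstant.
Variable d : R.
Hypothesis d_gt0 : 0 < d.
Hypothesis expansive_d : forall x y, ~ Sing phi x -> ~ Sing phi y ->
  forall s : R -> R, continuous s -> s 0 = 0 ->
  (forall t, mdist (phi t x) (phi (s t) y) <= d) ->
  orbit_seg phi `[- 1, 1] x y.

Lemma small_arc_orbit_bounded z : ~ Sing phi z ->
  (forall t, small_arc (d / 4) (phi t z)) ->
  forall t, mdist (phi t z) z < d / 4.
Proof.
move=> z_reg arc_z.
have [u] : orbit_seg phi `[- 1, 1] z (phi 2 z).
  apply: (expansive_d z_reg (fun S => z_reg (Sing_flow S)) (fun=> cvg_id)) => // t.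
  rewrite -flowD addrC flowD metric_sym.
  apply: (le_trans (ltW (arc_z t 2 _))); first by apply/andP; split; lra.
  by have := d_gt0; lra.
rewrite /= in_itv /= => /andP[u_ge u_le] uz.
have period_z : phi (2 - u) z = z by rewrite addrC flowD -uz -flowD addNr flow0.
move=> t; have [|r /andP[r_ge0 r_le] ->] := periodic_flow_mod _ period_z t.
  lra.
by have := arc_z 0 r; rewrite flow0; apply; rewrite r_ge0; lra.
Qed.

Lemma orbit_seg_of_small_arc z w : ~ Sing phi z -> ~ Sing phi w ->
  (forall t, small_arc (d / 4) (phi t z)) -> mdist z w <= 3 * d / 4 ->
  orbit_seg phi `[- 1, 1] z w.
Proof.
move=> z_reg w_reg arc_z zw.
apply: (expansive_d z_reg w_reg (fun=> cvg_cst 0)) => // t; rewrite flow0.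
have := small_arc_orbit_bounded z_reg arc_z t.
have := metric_triangle (phi t z) z w; lra.
Qed.

Definition isolating_set (e : R) : set X :=
  [set z | small_arc (d / 4) z /\ exists2 q, Sing phi q & mdist q z < e].

Lemma near_Sing_orbit_in_isolating_set_Sing q : Sing phi q ->
  \forall q' \near q & e \near 0^'+, forall z, mdist q' z < e ->
    (forall t, isolating_set e (phi t z)) -> Sing phi z.
Proof.
move=> Sq; have d8_gt0 : 0 < d / 8 by have := d_gt0; lra.
have [[w [w_reg qw]]|no_reg] := pselect (exists w, ~ Sing phi w /\ mdist q w < d / 4).
- have [r r_gt0 rS] := nonSing_dist_gt0 w_reg.
  exists (ball q (d / 8), [set e | e < Num.min (d / 8) r]) => /=.
    by split; [exact: nbhsx_ballx | apply: nbhs_right_lt; rewrite lt_min d8_gt0].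
  move=> [q' e] /= [+ +] z q'z trap_z.
  rewrite ballEmdist lt_min /= => qq' /andP[e_lt e_r].
  apply: contrapT => z_reg.
  have [u _ uz] : orbit_seg phi `[- 1, 1] z w.
    apply: orbit_seg_of_small_arc => // [t|]; first exact: (trap_z t).1.
    have := metric_triangle z q' w; have := metric_triangle q' q w.
    rewrite (metric_sym z q') (metric_sym q' q); lra.
  have [_ [q'' Sq'']] := trap_z u; rewrite uz metric_sym.
  by have := rS q'' Sq''; lra.
- exists (ball q (d / 8), [set e | e < d / 8]) => /=.
    by split; [exact: nbhsx_ballx | exact: nbhs_right_lt].
  move=> [q' e] /= [+ e_lt] z q'z _; rewrite ballEmdist /= => qq'.
  apply: contrapT => z_reg; apply: no_reg; exists z; split => //.
  have := metric_triangle q q' z; lra.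
Qed.

Lemma orbit_in_isolating_set_Sing : compact (Sing phi) ->
  exists2 e, 0 < e & forall z, (forall t, isolating_set e (phi t z)) -> Sing phi z.
Proof.
move=> SingK.
have cover := (compact_near_coveringP _).1 SingK R 0^'+ _ _
  near_Sing_orbit_in_isolating_set_Sing.
have [e [e_gt0 He]] := filter_ex (filterI (nbhs_right_gt 0) (cover _)).
exists e => // z trap_z.
have [_ [q Sq]] := trap_z 0; rewrite flow0 => qz.
exact: He q Sq z qz trap_z.
Qed.

Lemma Sing_sub_interior_isolating_set e : 0 < e ->
  Sing phi `<=` interior (isolating_set e).
Proof.
move=> e_gt0 q Sq; have d4_gt0 : 0 < d / 4 by have := d_gt0; lra.
apply: filterS (filterI (near_Sing_small_arc d4_gt0 Sq) (nbhsx_ballx q e e_gt0)).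
by move=> z [arc_z]; rewrite ballEmdist => qz; split=> //; exists q.
Qed.

End ExpansiveConstant.
End Flow.

Theorem mainTheorem13 (R : realType) (X : metricType R) (phi : R -> X -> X) :
  is_flow phi -> compact [set: X] ->
  expansive_on phi (~` Sing phi) ->
  dyn_isolated phi (Sing phi).
Proof.
move=> flow_phi X_compact expansive_phi.
have [d d_gt0 expansive_d] := expansive_phi 1 ltr01.
have Sing_compact : compact (Sing phi).
  exact: subclosed_compact (closed_Sing flow_phi) X_compact (@subsetT _ _).
have [e e_gt0 trapped_Sing] :=
  orbit_in_isolating_set_Sing flow_phi d_gt0 expansive_d Sing_compact.
have [_ [flow0 flowD]] := flow_phi.
split=> //; first by move=> t x Sx s; rewrite !Sx.
exists (isolating_set phi d e); split.
  exists (interior (isolating_set phi d e)); split; last exact: interior_subset.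
  - exact: open_interior.
  - exact: Sing_sub_interior_isolating_set.
apply/seteqP; split=> [q Sq t _|z orbit_z].
  exists q; last by rewrite Sq.
  by split; [move=> r _; rewrite Sq mdistxx; lra | exists q; rewrite ?mdistxx].
apply: trapped_Sing => t; have [w Uw] := orbit_z (- t) I.
by move=> <-; rewrite -flowD subrr flow0.
Qed.
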